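(* Let $(\mathbb{H}, \langle\cdot,\cdot\rangle)$ be a separable real Hilbert space of functions $\mathcal{X} \to \mathbb{R}$, and let $G$ be a group acting linearly on $\mathbb{H}$ from the left such that $\langle g f_1, g f_2\rangle = \langle f_1, f_2\rangle$ for all $f_1, f_2 \in \mathbb{H}$ and $g \in G$. Let $T\colon \mathbb{H}\to\mathbb{H}$ be a bounded linear operator which is compact. Then there exist a sequence of continuous (possibly nonlinear) operators $E_n\colon \mathbb{H}^{1+2n}\to \mathbb{H}$, $n\ge 1$, and a sequence of functions $(t_n)_{n\ge1}\subseteq \mathbb{H}$ such that every $E_n$ is $G$-equivariant, i.e. \[ E_n(g f_1, g f_2, \ldots, g f_{2n+1}) = g\,E_n(f_1, f_2, \ldots, f_{2n+1}) \quad\text{for all } g\in G \text{ and } f_1,\ldots,f_{2n+1}\in\mathbb{H}, \] and \[ \big\| T - E_n(\,\cdot\,, t_1, \ldots, t_{2n}) \big\| \to 0 \quad (n\to\infty), \] where $\|S\| = \sup_{f\in\mathbb{H},\,\|f\|\le 1}\|S(f)\|$ denotes the operator norm of a map $S\colon\mathbb{H}\to\mathbb{H}$.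
   Context: A bounded linear operator on $\mathbb{H}$ is compact if the image of every bounded set is relatively compact. The group action is linear: $g(f_1+f_2) = gf_1 + gf_2$ (and $g(\lambda f)=\lambda gf$), and it is a left action ($ef = f$, $h(gf) = (hg)f$). *)

From HB Require Import structures.
From mathcomp Require Import all_boot all_order all_algebra.
From mathcomp Require Import all_classical all_reals all_analysis.
Set Implicit Arguments. Unset Strict Implicit. Unset Printing Implicit Defensive.
Import Order.TTheory GRing.Theory Num.Theory.
Import numFieldNormedType.Exports.
Local Open Scope classical_set_scope.
Local Open Scope ring_scope.

Definition is_group (G : Type) (mul : G -> G -> G) (one : G) (inv : G -> G) :=
  [/\ forall a b c, mul a (mul b c) = mul (mul a b) c,
      forall a, mul one a = a & forall a, mul (inv a) a = one].

Definition is_inner_product (R : realType) (H : normedModType R)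
  (ip : H -> H -> R) :=
  [/\ forall f1 f2, ip f1 f2 = ip f2 f1,
      forall a f1 f2 f3, ip (a *: f1 + f2) f3 = a * ip f1 f3 + ip f2 f3,
      forall f, 0 <= ip f f
    & forall f, `|f| = Num.sqrt (ip f f)].

Definition separable (T : topologicalType) :=
  exists D : set T, countable D /\ closure D = setT.

Definition bounded_subset (R : realType) (H : normedModType R) (B : set H) :=
  exists M : R, forall f, B f -> `|f| <= M.

Definition compact_operator (R : realType) (H : normedModType R) (T : H -> H) :=
  forall B : set H, bounded_subset B -> compact (closure (T @` B)).

Definition bounded_operator (R : realType) (H : normedModType R) (T : H -> H) :=
  exists M : R, forall f, `|T f| <= M * `|f|.

(* continuity on H^k with the product topology (max-norm, epsilon-delta) *)
Definition continuous_multi (R : realType) (H : normedModType R) (k : nat)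
  (E : ('I_k -> H) -> H) :=
  forall (x : 'I_k -> H) (eps : R), 0 < eps ->
    exists2 delta : R, 0 < delta &
      forall y : 'I_k -> H, (forall i, `|x i - y i| < delta) -> `|E x - E y| < eps.

(* operator norm sup_{|f| <= 1} |S f|, in the extended reals
   (may be +oo for a nonlinear S) *)
Definition op_norm (R : realType) (H : normedModType R) (S : H -> H) : \bar R :=
  ereal_sup [set (`|S f|)%:E | f in [set f : H | `|f| <= 1]].

(* the argument vector (f, t_1, ..., t_{2n}) of length 2n+1 *)
Definition args (H : Type) (n : nat) (f : H) (t : nat -> H) : 'I_(2 * n).+1 -> H :=
  fun i => if nat_of_ord i == 0%N then f else t (nat_of_ord i).

From HB Require Import structures.
From mathcomp Require Import all_boot all_order all_algebra.
From mathcomp Require Import all_classical all_reals all_analysis.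
From mathcomp Require Import lra zify.
Set Implicit Arguments. Unset Strict Implicit. Unset Printing Implicit Defensive.
Import Order.TTheory GRing.Theory Num.Theory.
Import numFieldNormedType.Exports.
Local Open Scope classical_set_scope.
Local Open Scope ring_scope.

(* E_n(f, t_1, ..., t_2n) := sum_(k < n) <t_(2k+1), f> t_(2k+2) is
   built from inner products and linear combinations only, so it is continuous
   and equivariant under every linear isometric action.  Choose an orthonormal
   sequence (x_m) greedily: x_m is a unit vector orthogonal to x_0, ..., x_(m-1)
   with |T x_m| more than half of the norm s_m of T on the orthogonal complement
   of x_0, ..., x_(m-1).  For t_(2k+1) = x_k and t_(2k+2) = T x_k we get
   T f - E_n(f, t) = T (f - P_n f) with P_n the orthogonal projection onto
   x_0, ..., x_(n-1), hence ||T - E_n(., t)|| <= s_n.  The s_n decrease to 0: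
   otherwise |T x_m| stays above some e > 0, but every cluster point y of (T x_m)
   (one exists by compactness) is 0, because adding N of the x_m whose images
   are within |y|/2 of y gives f with |f| = sqrt N and |T f| >= N |y| / 2,
   contradicting the boundedness of T for large N. *)

Section InnerProduct.
Variables (R : realType) (H : normedModType R) (ip : H -> H -> R).
Hypothesis hip : is_inner_product ip.

Lemma ipC f g : ip f g = ip g f.
Proof. by case: hip. Qed.

Lemma ip_ge0 f : 0 <= ip f f.
Proof. by case: hip. Qed.

Lemma normr_ip f : `|f| ^+ 2 = ip f f.
Proof. by case: hip => _ _ _ ->; rewrite sqr_sqrtr ?ip_ge0. Qed.

Lemma ip0l g : ip 0 g = 0.
Proof.
case: hip => _ lin _ _; have := lin 1 0 0 g; rewrite scale1r addr0 mul1r.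
by move=> h; apply: (addrI (ip 0 g)); rewrite addr0 -h.
Qed.

Lemma ipDl f1 f2 g : ip (f1 + f2) g = ip f1 g + ip f2 g.
Proof. by case: hip => _ lin _ _; rewrite -[f1]scale1r lin mul1r scale1r. Qed.

Lemma ipZl a f g : ip (a *: f) g = a * ip f g.
Proof. by case: hip => _ lin _ _; rewrite -[a *: f]addr0 lin ip0l addr0. Qed.

Lemma ipNl f g : ip (- f) g = - ip f g.
Proof. by rewrite -scaleN1r ipZl mulN1r. Qed.

Lemma ipBl f1 f2 g : ip (f1 - f2) g = ip f1 g - ip f2 g.
Proof. by rewrite ipDl ipNl. Qed.

Lemma ip0r f : ip f 0 = 0.
Proof. by rewrite ipC ip0l. Qed.

Lemma ipDr f g1 g2 : ip f (g1 + g2) = ip f g1 + ip f g2.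
Proof. by rewrite !(ipC f) ipDl. Qed.

Lemma ipZr a f g : ip f (a *: g) = a * ip f g.
Proof. by rewrite !(ipC f) ipZl. Qed.

Lemma ipBr f g1 g2 : ip f (g1 - g2) = ip f g1 - ip f g2.
Proof. by rewrite !(ipC f) ipBl. Qed.

Lemma ip_sum_l I (r : seq I) (P : pred I) (F : I -> H) g :
  ip (\sum_(i <- r | P i) F i) g = \sum_(i <- r | P i) ip (F i) g.
Proof. exact: (big_morph (ip ^~ g) (fun f1 f2 => ipDl f1 f2 g) (ip0l g)). Qed.

Lemma ip_sum_r I (r : seq I) (P : pred I) (F : I -> H) f :
  ip f (\sum_(i <- r | P i) F i) = \sum_(i <- r | P i) ip f (F i).
Proof. exact: (big_morph (ip f) (ipDr f) (ip0r f)). Qed.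

Lemma ip_norm_orth f g : ip f g = 0 -> `|f + g| ^+ 2 = `|f| ^+ 2 + `|g| ^+ 2.
Proof. by move=> fg; rewrite !normr_ip ipDl !ipDr fg (ipC g) fg addr0 add0r. Qed.

Lemma ip_CauchySchwarz f g : `|ip f g| <= `|f| * `|g|.
Proof.
have [->|g_neq0] := eqVneq g 0; first by rewrite ip0r !normr0 mulr0.
have gg_gt0 : 0 < ip g g by rewrite -normr_ip exprn_gt0 ?normr_gt0.
rewrite -(ler_pXn2r (_ : 0 < 2)%N) ?nnegrE ?mulr_ge0 //.
rewrite exprMn !normr_ip real_normK ?num_real //.
set l := ip f g / ip g g; have lE : l * ip g g = ip f g by rewrite divfK ?gt_eqF.
(* [0 <= ip (f - l *: g) (f - l *: g)] reduces to [l * ip f g <= ip f f] *)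
have := ip_ge0 (f - l *: g); rewrite ipBl !ipBr !ipZl !ipZr (ipC g f) => h.
nra.
Qed.

Lemma norm_ipZ_sub_le (a b c a' b' c' : H) :
  `|ip a b *: c - ip a' b' *: c'| <=
  `|a - a'| * `|b| * `|c| + `|a'| * `|b - b'| * `|c| + `|a'| * `|b'| * `|c - c'|.
Proof.
have -> : ip a b *: c - ip a' b' *: c' =
    ip (a - a') b *: c + ip a' (b - b') *: c + ip a' b' *: (c - c').
  rewrite ipBl ipBr scalerBr -!scalerDl [ip a b - _ + _]addrA subrK.
  by rewrite addrA -scalerDl subrK.
have term u v w : `|ip u v *: w| <= `|u| * `|v| * `|w|.
  by rewrite normrZ ler_wpM2r ?ip_CauchySchwarz.
by do 2 (apply: le_trans (ler_normD _ _) _; apply: lerD => //).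
Qed.

End InnerProduct.

Section ContinuousMulti.
Variables (R : realType) (H : normedModType R) (k : nat).

Lemma continuous_multi_cst (c : H) : continuous_multi (fun _ : 'I_k -> H => c).
Proof. by move=> x eps eps_gt0; exists 1 => // y _; rewrite subrr normr0. Qed.

Lemma continuous_multiD (E1 E2 : ('I_k -> H) -> H) :
  continuous_multi E1 -> continuous_multi E2 ->
  continuous_multi (fun x => E1 x + E2 x).
Proof.
move=> cE1 cE2 x eps eps_gt0.
have eps2_gt0 : 0 < eps / 2 by rewrite divr_gt0.
have [d1 d1_gt0 E1d1] := cE1 x _ eps2_gt0.
have [d2 d2_gt0 E2d2] := cE2 x _ eps2_gt0.
exists (Num.min d1 d2) => [|y xy]; first by rewrite lt_min d1_gt0.
have /E1d1 E1xy : forall i, `|x i - y i| < d1.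
  by move=> i; have := xy i; rewrite lt_min => /andP[].
have /E2d2 E2xy : forall i, `|x i - y i| < d2.
  by move=> i; have := xy i; rewrite lt_min => /andP[].
rewrite opprD addrACA (le_lt_trans (ler_normD _ _)) //.
by rewrite [eps]splitr ltrD.
Qed.

Lemma continuous_multi_sum I (r : seq I) (F : I -> ('I_k -> H) -> H) :
  (forall i, continuous_multi (F i)) ->
  continuous_multi (fun x => \sum_(i <- r) F i x).
Proof.
move=> cF; elim: r => [|i r IHr].
  by under eq_fun do rewrite big_nil; exact: continuous_multi_cst.
by under eq_fun do rewrite big_cons; exact: continuous_multiD.
Qed.

Lemma continuous_multi_ipZ (ip : H -> H -> R) (i j l : 'I_k) :
  is_inner_product ip ->
  continuous_multi (fun x : 'I_k -> H => ip (x i) (x j) *: x l).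
Proof.
move=> hip x eps eps_gt0.
pose S := `|x i| + `|x j| + `|x l| + 1.
have xi0 := normr_ge0 (x i); have xj0 := normr_ge0 (x j); have xl0 := normr_ge0 (x l).
have S_gt0 : 0 < S by rewrite /S; lra.
pose d := Num.min 1 (eps / (4 * S ^+ 2)).
have d_gt0 : 0 < d by rewrite lt_min ltr01 divr_gt0 ?mulr_gt0 ?exprn_gt0.
have d_le1 : d <= 1 by rewrite ge_min lexx.
have dS : 4 * (d * S ^+ 2) <= eps.
  have : d <= eps / (4 * S ^+ 2) by rewrite ge_min lexx orbT.
  by rewrite ler_pdivlMr ?mulr_gt0 ?exprn_gt0 // mulrCA.
exists d => // y xy.
have near m : `|x m - y m| <= d by exact/ltW.
have y_le m : `|y m| <= `|x m| + 1.
  rewrite -[y m](subKr (x m)) (le_trans (ler_normB _ _)) // lerD2l.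
  by rewrite (le_trans (near m)).
have le3 (p q r p' q' r' : R) : 0 <= p -> 0 <= q -> 0 <= r ->
    p <= p' -> q <= q' -> r <= r' -> p * q * r <= p' * q' * r'.
  by move=> *; rewrite ler_pM ?mulr_ge0 ?ler_pM.
apply: le_lt_trans (norm_ipZ_sub_le hip _ _ _ _ _ _) _.
have [xiS xjS xlS] : [/\ `|x i| <= S, `|x j| <= S & `|x l| <= S].
  by rewrite /S; split; lra.
have yiS : `|y i| <= S by rewrite (le_trans (y_le i)) // /S; lra.
have yjS : `|y j| <= S by rewrite (le_trans (y_le j)) // /S; lra.
have := le3 _ _ _ d S S (normr_ge0 _) (normr_ge0 _) (normr_ge0 _) (near i) xjS xlS.
have := le3 _ _ _ S d S (normr_ge0 _) (normr_ge0 _) (normr_ge0 _) yiS (near j) xlS.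
have := le3 _ _ _ S S d (normr_ge0 _) (normr_ge0 _) (normr_ge0 _) yiS yjS (near l).
have : 0 < d * S ^+ 2 by rewrite mulr_gt0 ?exprn_gt0.
rewrite expr2; lra.
Qed.

End ContinuousMulti.

Lemma additive_map0 (V W : zmodType) (A : V -> W) :
  (forall a b, A (a + b) = A a + A b) -> A 0 = 0.
Proof. by move=> AD; apply: (addrI (A 0)); rewrite -AD !addr0. Qed.

Section OuterSum.
Variables (R : realType) (H : normedModType R) (ip : H -> H -> R).

Definition outer_sum (n : nat) (fs : 'I_(2 * n).+1 -> H) : H :=
  \sum_(k < n) ip (fs (inord k.*2.+1)) (fs ord0) *: fs (inord k.*2.+2).
Arguments outer_sum : clear implicits.

(* [interleave u v (2k+1) = u k] and [interleave u v (2k+2) = v k] *)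
Definition interleave (u v : nat -> H) (j : nat) : H :=
  if odd j then u j./2 else v j.-1./2.

Lemma continuous_multi_outer_sum n :
  is_inner_product ip -> continuous_multi (outer_sum n).
Proof. by move=> hip; apply: continuous_multi_sum => k; exact: continuous_multi_ipZ. Qed.

Lemma outer_sum_equivariant n (A : H -> H) :
  (forall f1 f2, A (f1 + f2) = A f1 + A f2) ->
  (forall (a : R) f, A (a *: f) = a *: A f) ->
  (forall f1 f2, ip (A f1) (A f2) = ip f1 f2) ->
  forall fs, outer_sum n (A \o fs) = A (outer_sum n fs).
Proof.
move=> AD AZ Aip fs; rewrite /outer_sum (big_morph A AD (additive_map0 AD)).
by apply: eq_bigr => k _; rewrite AZ Aip.
Qed.

Lemma outer_sum_interleave n f (u v : nat -> H) :
  outer_sum n (@args H n f (interleave u v)) = \sum_(k < n) ip (u k) f *: v k.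
Proof.
apply: eq_bigr => k _; have kn := ltn_ord k.
rewrite /args /interleave !inordK /=; try lia.
by rewrite odd_double uphalf_double.
Qed.

End OuterSum.

Arguments outer_sum {R H} ip n fs.

Section OrthonormalProjection.
Variables (R : realType) (H : normedModType R) (ip : H -> H -> R) (x : nat -> H).
Hypotheses (hip : is_inner_product ip)
  (x_orth : forall i j, i != j -> ip (x i) (x j) = 0)
  (x_unit : forall i, x i = 0 \/ ip (x i) (x i) = 1).

Definition orth_proj (k : nat) (f : H) : H := \sum_(i < k) ip f (x i) *: x i.

Lemma ip_orth_proj k f j : ip (orth_proj k f) (x j) = if (j < k)%N then ip f (x j) else 0.
Proof.
rewrite (ip_sum_l hip); under eq_bigr do rewrite (ipZl hip).
case: ifPn => [jk|kj]; last first.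
  rewrite big1 // => i _; rewrite x_orth ?mulr0 //.
  by apply: contraNneq kj => <-.
rewrite (bigD1 (Ordinal jk)) //= big1 ?addr0 => [|i ij].
  by case: (x_unit j) => ->; rewrite ?(ip0r hip) ?mulr0 ?mulr1.
by rewrite x_orth ?mulr0 //; apply: contraNneq ij => ij; apply: val_inj.
Qed.

Lemma ip_sub_orth_proj k f j : (j < k)%N -> ip (f - orth_proj k f) (x j) = 0.
Proof. by move=> jk; rewrite (ipBl hip) ip_orth_proj jk subrr. Qed.

Lemma norm_sub_orth_proj_le k f : `|f - orth_proj k f| <= `|f|.
Proof.
have : ip (f - orth_proj k f) (orth_proj k f) = 0.
  by rewrite (ip_sum_r hip) big1 // => i _; rewrite (ipZr hip) ip_sub_orth_proj ?mulr0.
move/(ip_norm_orth hip); rewrite subrK => normfE.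
by rewrite -(ler_pXn2r (_ : 0 < 2)%N) ?nnegrE // normfE lerDl sqr_ge0.
Qed.

End OrthonormalProjection.

Section Greedy.
Variables (R : realType) (H : normedModType R) (ip : H -> H -> R) (T : H -> H).

Definition orth_ball (y : nat -> H) (m : nat) : set H :=
  [set f | `|f| <= 1 /\ forall j, (j < m)%N -> ip f (y j) = 0].

Definition restr_norm (y : nat -> H) (m : nat) : R :=
  sup [set `|T f| | f in orth_ball y m].

Definition near_maximizers (y : nat -> H) (m : nat) : set H :=
  [set g | ip g g = 1 /\ orth_ball y m g /\ restr_norm y m / 2 < `|T g|].

(* [xget 0] yields [0] when there is no near-maximizer, i.e. when
   [restr_norm] vanishes. *)
Fixpoint greedy_prefix (m : nat) : nat -> H :=
  if m is m'.+1 then fun k =>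
    if k == m' then xget 0 (near_maximizers (greedy_prefix m') m')
    else greedy_prefix m' k
  else fun => 0.

Definition greedy (k : nat) : H := greedy_prefix k.+1 k.

Lemma greedy_prefixE m k : (k < m)%N -> greedy_prefix m k = greedy k.
Proof.
elim: m => [|m IHm] // km /=; case: eqP => [->|/eqP kNm].
  by rewrite /greedy /= eqxx.
by apply: IHm; lia.
Qed.

Lemma near_maximizers_eq y y' m : (forall j, (j < m)%N -> y j = y' j) ->
  near_maximizers y m = near_maximizers y' m.
Proof.
move=> yy'; have ballE : orth_ball y m = orth_ball y' m.
  by apply/seteqP; split=> f [f1 fy]; split=> // j jm; rewrite -(fy j) ?yy'.
by rewrite /near_maximizers /restr_norm ballE.
Qed.

Lemma greedyE m : greedy m = xget 0 (near_maximizers greedy m).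
Proof.
rewrite /greedy /= eqxx; congr xget; apply: near_maximizers_eq => j jm.
exact: greedy_prefixE.
Qed.

Lemma greedy_spec m : greedy m = 0 \/ near_maximizers greedy m (greedy m).
Proof. by rewrite greedyE; case: xgetP => [g _ ?|_]; [right|left]. Qed.

Hypothesis hip : is_inner_product ip.

Lemma greedy_orth i j : i != j -> ip (greedy i) (greedy j) = 0.
Proof.
have lt_orth i' j' : (j' < i')%N -> ip (greedy i') (greedy j') = 0.
  by move=> ji; case: (greedy_spec i') => [->|[_ [[_ ->]]]]; rewrite ?(ip0l hip).
by case: (ltngtP i j) => // [ij|ji] _; [rewrite (ipC hip)|]; exact: lt_orth.
Qed.

Lemma greedy_unit i : greedy i = 0 \/ ip (greedy i) (greedy i) = 1.
Proof. by case: (greedy_spec i) => [|[]]; [left|right]. Qed.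

Variable M : R.
Hypotheses (TD : forall f1 f2, T (f1 + f2) = T f1 + T f2)
  (TZ : forall (a : R) f, T (a *: f) = a *: T f)
  (TM : forall f, `|T f| <= M * `|f|).

Lemma orth_ball0 y m : orth_ball y m 0.
Proof. by split=> [|j _]; [rewrite normr0 | exact: ip0l]. Qed.

Lemma has_sup_restr_norm y m : has_sup [set `|T f| | f in orth_ball y m].
Proof.
split; first by exists `|T 0|, 0 => //; exact: orth_ball0.
exists `|M| => _ [f [f1 _] <-].
by rewrite (le_trans (TM f)) // (le_trans (ler_wpM2r _ (ler_norm M))) ?ler_piMr.
Qed.

Lemma restr_norm_ub y m f : orth_ball y m f -> `|T f| <= restr_norm y m.
Proof. by move=> fy; apply: sup_upper_bound (has_sup_restr_norm y m) _ _; exists f. Qed.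

Lemma restr_norm_ge0 y m : 0 <= restr_norm y m.
Proof. exact: le_trans (normr_ge0 _) (restr_norm_ub (orth_ball0 y m)). Qed.

Lemma restr_norm_antitone y m m' : (m <= m')%N -> restr_norm y m' <= restr_norm y m.
Proof.
move=> mm'; apply: ge_sup; first by case: (has_sup_restr_norm y m').
move=> _ [f [f1 fy] <-]; apply: restr_norm_ub; split=> // j jm.
by apply: fy; lia.
Qed.

Lemma near_maximizers_nonempty y m : 0 < restr_norm y m -> near_maximizers y m !=set0.
Proof.
move=> r_gt0.
have [_ [f [f1 fy] <-] Tf_gt] : exists2 z, [set `|T f| | f in orth_ball y m] z &
    restr_norm y m / 2 < z.
  apply: sup_gt; first by case: (has_sup_restr_norm y m).
  by rewrite ltr_pdivrMr // ltr_pMr // ltr1n.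
have f_gt0 : 0 < `|f|.
  rewrite normr_gt0; apply: contraTneq Tf_gt => ->.
  by rewrite (additive_map0 TD) normr0 -leNgt divr_ge0 ?restr_norm_ge0.
pose g := `|f|^-1 *: f.
have g_norm : `|g| = 1 by rewrite normrZ normfV normr_id mulVf ?gt_eqF.
exists g; split; first by rewrite -(normr_ip hip) g_norm expr1n.
split; first by split=> [|j jm]; rewrite ?g_norm // (ipZl hip) fy ?mulr0.
by rewrite TZ normrZ normfV normr_id (lt_le_trans Tf_gt) // ler_peMl ?invf_ge1.
Qed.

Lemma greedy_near_maximizer m :
  0 < restr_norm greedy m -> near_maximizers greedy m (greedy m).
Proof. by move/near_maximizers_nonempty => ?; rewrite greedyE; exact: xgetPex. Qed.

End Greedy.

Lemma cluster_seq_near (R : realType) (V : normedModType R) (s : nat -> V) y :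
  cluster (s @ \oo) y ->
  forall N d, 0 < d -> exists2 m, (N <= m)%N & `|y - s m| < d.
Proof.
move=> ys N d d_gt0.
have tail_N : (s @ \oo) [set s m | m in [set m | (N <= m)%N]].
  by exists N => // m /= Nm; exists m.
have [_ [[m Nm <-] /= ysm]] := ys _ _ tail_N (nbhsx_ballx y _ d_gt0).
by exists m => //; move: ysm; rewrite -ball_normE.
Qed.

Section CompactOrthonormal.
Variables (R : realType) (H : normedModType R) (ip : H -> H -> R) (T : H -> H).
Variables (M : R) (u : nat -> H).
Hypotheses (hip : is_inner_product ip)
  (TD : forall f1 f2, T (f1 + f2) = T f1 + T f2)
  (TM : forall f, `|T f| <= M * `|f|) (Tcompact : compact_operator T)
  (u_orth : forall i j, i != j -> ip (u i) (u j) = 0)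
  (u_unit : forall i, ip (u i) (u i) = 1).

Lemma sum_near_cluster y d : cluster ((T \o u) @ \oo) y -> 0 < d ->
  forall N : nat, exists f K, [/\ ip f f = N%:R,
    forall m, (K < m)%N -> ip f (u m) = 0 & `|T f - N%:R *: y| <= N%:R * d].
Proof.
move=> yc d_gt0; elim=> [|N [f [K [ffN fu Tf]]]].
  exists 0, 0%N; split=> [|m _|]; rewrite ?(ip0l hip) //.
  by rewrite (additive_map0 TD) scale0r subrr normr0 mul0r.
have [m Km ym] := cluster_seq_near yc K.+1 d_gt0.
exists (f + u m), m; split=> [|m' mm'|].
- by rewrite -(normr_ip hip) (ip_norm_orth hip) ?fu // !(normr_ip hip) ffN u_unit -natr1.
- by rewrite (ipDl hip) fu ?u_orth ?add0r //; lia.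
- rewrite TD -natr1 scalerDl scale1r opprD addrACA mulrDl mul1r.
  by rewrite (le_trans (ler_normD _ _)) // lerD // distrC ltW.
Qed.

Lemma cluster_orthonormal_eq0 y : cluster ((T \o u) @ \oo) y -> y = 0.
Proof.
move=> yc; have [//|/negbTE y_neq0] := eqVneq y 0; exfalso.
have y_gt0 : 0 < `|y| by rewrite normr_gt0 y_neq0.
pose N := Num.bound (4 * M ^+ 2 / `|y| ^+ 2).
have : 4 * M ^+ 2 / `|y| ^+ 2 < N%:R.
  by apply: archi_boundP; rewrite divr_ge0 ?sqr_ge0 // mulr_ge0 ?sqr_ge0.
rewrite ltr_pdivrMr ?exprn_gt0 // => N_large.
have [f [K [ffN _ Tf_near]]] := sum_near_cluster yc (divr_gt0 y_gt0 (ltr0Sn _ 1)) N.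
have Tf_ge : N%:R * `|y| / 2 <= M * `|f|.
  apply: le_trans (TM f).
  have := ler_normB (T f) (T f - N%:R *: y); rewrite subKr normrZ ger0_norm //.
  lra.
have f2 : `|f| ^+ 2 = N%:R by rewrite (normr_ip hip).
have : (N%:R * `|y| / 2) ^+ 2 <= (M * `|f|) ^+ 2.
  by rewrite ler_pXn2r ?nnegrE // (le_trans _ Tf_ge) // divr_ge0 ?mulr_ge0.
rewrite [in X in _ <= X]exprMn f2 => sq_le.
have N_gt0 : 0 < N%:R :> R.
  rewrite -(pmulr_lgt0 _ (exprn_gt0 2 y_gt0)) (le_lt_trans _ N_large) //.
  by rewrite mulr_ge0 ?sqr_ge0.
nra.
Qed.

Lemma compact_orthonormal_small e : 0 < e -> exists m, `|T (u m)| < e.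
Proof.
move=> e_gt0.
have u_le1 m : `|u m| <= 1.
  by rewrite le_eqVlt -sqrp_eq1 ?(normr_ip hip) ?u_unit ?eqxx.
have ball_compact : compact (closure (T @` [set f | `|f| <= 1])).
  by apply: Tcompact; exists 1.
have [y [_ yc]] : closure (T @` [set f | `|f| <= 1]) `&` cluster ((T \o u) @ \oo) !=set0.
  apply: (ball_compact ((T \o u) @ \oo)); exists 0%N => // m _.
  by apply: subset_closure; exists (u m); first exact: u_le1.
have y0 := cluster_orthonormal_eq0 yc; subst y.
have [m _] := cluster_seq_near yc 0 e_gt0.
by rewrite sub0r normrN; exists m.
Qed.

End CompactOrthonormal.

Lemma op_norm_ge0 (R : realType) (H : normedModType R) (S : H -> H) :
  (0 <= op_norm S)%E.
Proof.
apply: le_ereal_sup_tmp; exists `|S 0|%:E; last by rewrite lee_fin.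
by exists 0 => //=; rewrite normr0.
Qed.

Lemma op_norm_le (R : realType) (H : normedModType R) (S : H -> H) (b : R) :
  (forall f, `|f| <= 1 -> `|S f| <= b) -> (op_norm S <= b%:E)%E.
Proof. by move=> Sb; apply: ge_ereal_sup => _ [f f1 <-]; rewrite lee_fin Sb. Qed.

Section Approximation.
Variables (R : realType) (H : normedModType R) (ip : H -> H -> R) (T : H -> H).
Variables (M : R).
Hypotheses (hip : is_inner_product ip)
  (TD : forall f1 f2, T (f1 + f2) = T f1 + T f2)
  (TZ : forall (a : R) f, T (a *: f) = a *: T f)
  (TM : forall f, `|T f| <= M * `|f|) (Tcompact : compact_operator T).

Lemma restr_norm_greedy_cvg0 : restr_norm ip T (greedy ip T) n @[n --> \oo] --> 0.
Proof.
apply/cvgrPdist_le => e e_gt0.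
have [N rN] : exists N, restr_norm ip T (greedy ip T) N <= e.
  apply: contrapT => /forallNP r_gt.
  have {}r_gt m : e < restr_norm ip T (greedy ip T) m by rewrite ltNge; apply/negP.
  have near_max m := greedy_near_maximizer hip TD TZ TM (lt_trans e_gt0 (r_gt m)).
  have [m] := compact_orthonormal_small hip TD TM Tcompact (greedy_orth T hip)
    (fun m => (near_max m).1) (divr_gt0 e_gt0 (ltr0Sn _ 1)).
  have [_ [_ Tm]] := near_max m; have := r_gt m; lra.
exists N => // n /= Nn; rewrite sub0r normrN ger0_norm ?(restr_norm_ge0 hip TM) //.
exact: le_trans (restr_norm_antitone hip TM (greedy ip T) Nn) rN.
Qed.

Lemma sub_outer_sum_interleave (x : nat -> H) n f :
  T f - outer_sum ip n (@args H n f (interleave x (T \o x))) = T (f - orth_proj ip x n f).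
Proof.
have TN g : T (- g) = - T g by rewrite -scaleN1r TZ scaleN1r.
rewrite outer_sum_interleave TD TN /orth_proj (big_morph T TD (additive_map0 TD)).
by congr (_ - _); apply: eq_bigr => k _; rewrite TZ (ipC hip).
Qed.

Lemma op_norm_sub_outer_sum_greedy n :
  (op_norm (fun f => T f -
     outer_sum ip n (@args H n f (interleave (greedy ip T) (T \o greedy ip T))))%R
   <= (restr_norm ip T (greedy ip T) n)%:E)%E.
Proof.
apply: op_norm_le => f f1; rewrite sub_outer_sum_interleave.
have x_orth := greedy_orth T hip; have x_unit := greedy_unit ip T.
apply: (restr_norm_ub hip TM); split=> [|j jn]; last exact: ip_sub_orth_proj.
exact: le_trans (norm_sub_orth_proj_le hip x_orth x_unit n f) f1.
Qed.

End Approximation.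

Theorem theorem2
  (R : realType) (X : Type) (H : completeNormedModType R)
  (ip : H -> H -> R) (ev : H -> X -> R)
  (G : Type) (mul : G -> G -> G) (one : G) (inv : G -> G)
  (act : G -> H -> H) (T : H -> H) :
  is_inner_product ip ->
  separable H ->
  injective ev ->
  (forall a f1 f2, ev (a *: f1 + f2) = (fun x => a * ev f1 x + ev f2 x)) ->
  is_group mul one inv ->
  (forall g f1 f2, act g (f1 + f2) = act g f1 + act g f2) ->
  (forall g (a : R) f, act g (a *: f) = a *: act g f) ->
  (forall f, act one f = f) ->
  (forall g h f, act h (act g f) = act (mul h g) f) ->
  (forall g f1 f2, ip (act g f1) (act g f2) = ip f1 f2) ->
  (forall f1 f2, T (f1 + f2) = T f1 + T f2) ->
  (forall (a : R) f, T (a *: f) = a *: T f) ->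
  bounded_operator T ->
  compact_operator T ->
  exists (E : forall n : nat, ('I_(2 * n).+1 -> H) -> H) (t : nat -> H),
    (forall n, (0 < n)%N -> continuous_multi (E n)) /\
    (forall n, (0 < n)%N -> forall g (fs : 'I_(2 * n).+1 -> H),
        E n (fun i => act g (fs i)) = act g (E n fs)) /\
    (op_norm (fun f => T f - E n (@args H n f t)) @[n --> \oo] --> 0%E).
Proof.
move=> hip _ _ _ _ actD actZ _ _ act_ip TD TZ [M TM] Tcompact.
exists (outer_sum ip), (interleave (greedy ip T) (T \o greedy ip T)).
split; first by move=> n _; exact: continuous_multi_outer_sum.
split; first by move=> n _ g; exact: outer_sum_equivariant.
apply: (@squeeze_cvge _ _ _ _ (cst 0%E) _
  (fun n => (restr_norm ip T (greedy ip T) n)%:E)).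
- apply: nearW => n; rewrite op_norm_ge0.
  exact: op_norm_sub_outer_sum_greedy.
- exact: cvg_cst.
- apply: cvg_EFin; first exact: nearW.
  exact: restr_norm_greedy_cvg0 hip TD TZ TM Tcompact.
Qed.
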